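(* Let $N$ be a phylogenetic network on $X\subseteq[n]$ and let $i,j\in[n]$ be distinct. Then $(i,j)$ is reducible in $N$ (i.e. is a cherry or a reticulated-cherry of $N$) if and only if $(i,j)$ is reducible in $\boldsymbol\mu(N)$ (i.e. is a cherry or a reticulated-cherry of the multiset $\boldsymbol\mu(N)$).
   Context: A (binary) phylogenetic network on a finite set $X\subseteq[n]=\{1,\dots,n\}$ is a directed acyclic graph $N=(V,A)$ without parallel arcs in which every node is exactly one of: the root (indegree 0, outdegree 1; there is exactly one), a leaf (indegree 1, outdegree 0), a tree node (indegree 1, outdegree 2), or a reticulation (indegree 2, outdegree 1); the leaves are identified with the elements of $X$. $V_T(N)$ denotes the set of leaves and tree nodes, $V_H(N)$ the set of reticulations. $m(u,v)$ is the number of directed paths from $u$ to $v$ (trivial paths allowed). Extended $\mu$-vectors: $\mu_i(u)=m(u,i)$ for $i\in[n]$ (0 if $i\notin X$), $\mu_0(u)=\sum_{h\in V_H(N)} m(u,h)$, $\mu(u)=(\mu_0(u),\dots,\mu_n(u))$; $\boldsymbol\mu(N)$ is the multiset $\{\mu(u)\mid u\in V_T(N)\}$. $\delta_S$ is the 0/1 indicator vector of $S\subseteq\{0,\dots,n\}$ and $\delta_{j_1,\dots,j_k}=\delta_{\{j_1,\dots,j_k\}}$. For distinct leaves $i,j$ of $N$ with parents $p_i,p_j$, $(i,j)$ is a cherry of $N$ if $p_i=p_j$, and a reticulated-cherry of $N$ if $p_i$ is a reticulation, $p_j$ is a tree node and $p_j$ is a parent of $p_i$. For a finite multiset $\boldsymbol\mu$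 of vectors of nonnegative integers indexed by $0,\dots,n$ and distinct $i,j\in[n]$, $(i,j)$ is a cherry of $\boldsymbol\mu$ if $\delta_{i,j}$ belongs to $\boldsymbol\mu$ with multiplicity exactly 1 and every element $\mu$ of $\boldsymbol\mu$ other than $\delta_i,\delta_j$ satisfies $\mu_i=\mu_j$; $(i,j)$ is a reticulated-cherry of $\boldsymbol\mu$ if $\delta_{0,i,j}$ belongs to $\boldsymbol\mu$ with multiplicity exactly 1 and every element $\mu$ of $\boldsymbol\mu$ other than $\delta_i,\delta_j$ satisfies $\mu_0\ge\mu_i\ge\mu_j$. *)

From mathcomp Require Import all_boot.
Set Implicit Arguments. Unset Strict Implicit. Unset Printing Implicit Defensive.

Section Network.
Variables (V : finType) (A : rel V) (lab : V -> nat).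

Definition indeg (v : V) : nat := #|[set u | A u v]|.
Definition outdeg (v : V) : nat := #|[set w | A v w]|.

Definition is_root (v : V) : bool := (indeg v == 0) && (outdeg v == 1).
Definition is_leaf (v : V) : bool := (indeg v == 1) && (outdeg v == 0).
Definition is_tree (v : V) : bool := (indeg v == 1) && (outdeg v == 2).
Definition is_ret  (v : V) : bool := (indeg v == 2) && (outdeg v == 1).

Definition acyclic : Prop := forall u v : V, A u v -> ~~ connect A v u.

(* (V, A) with leaf labelling lab is a binary phylogenetic network on a set
   X ⊆ [n] = {1..n}; X is the set of labels of the leaves. *)
Definition is_network (n : nat) : Prop :=
  [/\ acyclic,
      forall v, [|| is_root v, is_leaf v, is_tree v | is_ret v],
      #|[set v | is_root v]| = 1,
      forall v, is_leaf v -> 1 <= lab v <= n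
    & {in is_leaf &, injective lab}].

(* m(u,v): number of directed paths from u to v (trivial path allowed).
   A path with k arcs is a k-tuple of successive nodes; in a DAG every
   path has fewer than #|V| arcs. *)
Definition npaths (u v : V) : nat :=
  \sum_(k < #|V|) #|[set t : k.-tuple V | path A u t && (last u t == v)]|.

Definition mu_vec (n : nat) (u : V) : {ffun 'I_n.+1 -> nat} :=
  [ffun k : 'I_n.+1 =>
     if (k : nat) == 0 then \sum_(h | is_ret h) npaths u h
     else \sum_(w | is_leaf w && (lab w == k)) npaths u w].

Definition is_VT (v : V) : bool := is_leaf v || is_tree v.

Definition mu_net (n : nat) : seq {ffun 'I_n.+1 -> nat} :=
  [seq mu_vec n u | u <- enum is_VT].

Definition net_cherry (i j : nat) : Prop :=
  exists vi vj p,
    [/\ is_leaf vi, lab vi = i, is_leaf vj & lab vj = j] /\ A p vi /\ A p vj.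

Definition net_ret_cherry (i j : nat) : Prop :=
  exists vi vj pi pj,
    [/\ is_leaf vi, lab vi = i, is_leaf vj & lab vj = j] /\
    [/\ A pi vi, A pj vj, is_ret pi, is_tree pj & A pj pi].

Definition net_reducible (i j : nat) : Prop :=
  net_cherry i j \/ net_ret_cherry i j.

End Network.

Definition delta (n : nat) (S : seq nat) : {ffun 'I_n.+1 -> nat} :=
  [ffun k : 'I_n.+1 => nat_of_bool ((k : nat) \in S)].

Section Multiset.
Variables (n : nat) (s : seq {ffun 'I_n.+1 -> nat}).

Definition ms_cherry (i j : nat) : Prop :=
  count_mem (delta n [:: i; j]) s = 1 /\
  forall x, x \in s -> x != delta n [:: i] -> x != delta n [:: j] ->
    x (inord i) = x (inord j).

Definition ms_ret_cherry (i j : nat) : Prop :=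
  count_mem (delta n [:: 0; i; j]) s = 1 /\
  forall x, x \in s -> x != delta n [:: i] -> x != delta n [:: j] ->
    x (inord i) <= x ord0 /\ x (inord j) <= x (inord i).

Definition ms_reducible (i j : nat) : Prop :=
  ms_cherry i j \/ ms_ret_cherry i j.

End Multiset.

From mathcomp Require Import all_boot zify.
Set Implicit Arguments. Unset Strict Implicit. Unset Printing Implicit Defensive.

(* If u is a tree vertex or a leaf with mu(u) = delta_{i,j} or delta_{0,i,j}, then u has
   exactly one path to each of the leaves i and j and no other leaf below it.  Every vertex
   below u reaches i or j, so a tree vertex below u has at least two such paths; hence the
   two children of u each have exactly one, and each is the leaf i, the leaf j, or a
   reticulation.  The reticulation count mu_0(u) in {0, 1} then forces u to be the parent of
   a cherry (i, j), or the parent of one of the leaves and of a reticulation whose child is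
   the other.  Conversely the parent of a (reticulated) cherry has exactly this vector and
   is the only vertex that does, and the equalities and inequalities required of the other
   vectors follow from m(u, i) = m(u, p_i).  If the reticulation sits above i rather than j,
   the child of the root has more paths to j than to i, which the multiset forbids. *)

Lemma big_tupleS (R : Type) (idx : R) (op : Monoid.com_law idx) (T : finType) k
    (F : k.+1.-tuple T -> R) :
  \big[op/idx]_(t : k.+1.-tuple T) F t =
  \big[op/idx]_(x : T) \big[op/idx]_(t : k.-tuple T) F (cons_tuple x t).
Proof.
rewrite pair_big (reindex (fun p : T * k.-tuple T => cons_tuple p.1 p.2)) //=.
exists (fun t => (thead t, behead_tuple t)) => [[x t] _ | t _] /=.
  by congr pair; apply: val_inj.
by rewrite [RHS]tuple_eta.
Qed.

Lemma sum_pred_eq (T : finType) (P : pred T) y : \sum_(x | P x) (x == y) = P y.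
Proof.
rewrite big_mkcond (bigD1 y) //= eqxx big1 ?addn0; first by case: (P y).
by move=> x /negbTE ->; case: (P x).
Qed.

Lemma sum_set2 (T : finType) a b (F : T -> nat) :
  a != b -> \sum_(x in [set a; b]) F x = F a + F b.
Proof. by move=> ab; rewrite big_setU1 ?big_set1 // inE. Qed.

Lemma sum_count_mem (T : finType) (P : pred T) (s : seq T) :
  \sum_(x | P x) count_mem x s = count P s.
Proof.
elim: s => [|y s IHs] /=; first by rewrite big1.
by rewrite big_split /= IHs; under eq_bigr do rewrite eq_sym; rewrite sum_pred_eq.
Qed.

Lemma eqn_add_mem2 (a b k : nat) : a != b -> (a == k) + (b == k) = (k \in [:: a; b]).
Proof.
rewrite !inE ![k == _]eq_sym.
by case: (a =P k) => [<- | _ _]; [rewrite eq_sym => /negbTE -> | case: (b == k)].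
Qed.

Lemma delta_inord n S k : k <= n -> delta n S (inord k) = (k \in S).
Proof. by move=> kn; rewrite ffunE inordK. Qed.

Lemma delta_ord0 n S : delta n S ord0 = (0 \in S).
Proof. by rewrite ffunE. Qed.

Section PathCount.
Variables (V : finType) (A : rel V).
Local Notation m := (npaths A).

Definition parents (v : V) : {set V} := [set u | A u v].
Definition children (v : V) : {set V} := [set w | A v w].

Lemma in_parents u v : (u \in parents v) = A u v. Proof. by rewrite inE. Qed.
Lemma in_children v w : (w \in children v) = A v w. Proof. by rewrite inE. Qed.

Definition npaths_len k (u v : V) : nat :=
  \sum_(t : k.-tuple V) (path A u t && (last u t == v)).

Lemma npathsE u v : m u v = \sum_(k < #|V|) npaths_len k u v.
Proof.
apply: eq_bigr => k _; rewrite -sum1_card big_mkcond /=.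
by apply: eq_bigr => t _; rewrite inE; case: (_ && _).
Qed.

Lemma npaths_len0 u v : npaths_len 0 u v = (u == v).
Proof.
by rewrite /npaths_len (big_pred1 [tuple]) // => t /=; rewrite (tuple0 t) /= eq_refl.
Qed.

Lemma npaths_lenSl k u v :
  npaths_len k.+1 u v = \sum_(w in children u) npaths_len k w v.
Proof.
rewrite /npaths_len big_tupleS [RHS]big_mkcond; apply: eq_bigr => w _ /=.
by rewrite in_children; case: (A u w); last by rewrite big1.
Qed.

Lemma npaths_lenSr k u v :
  npaths_len k.+1 u v = \sum_(w in parents v) npaths_len k u w.
Proof.
(* by induction from the first-arc recursion, avoiding a reindexing by last entries *)
elim: k u v => [|k IHk] u v.
  rewrite npaths_lenSl; under eq_bigr do rewrite npaths_len0.
  under [RHS]eq_bigr do rewrite npaths_len0 eq_sym.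
  by rewrite !sum_pred_eq in_parents in_children.
rewrite npaths_lenSl; under eq_bigr do rewrite IHk.
by rewrite exchange_big; apply: eq_bigr => w _; rewrite npaths_lenSl.
Qed.

Hypothesis acyc : acyclic A.

Lemma path_uniq x t : path A x t -> uniq (x :: t).
Proof.
elim: t x => [|y t IHt] x //= /andP[Axy yt].
have /= -> := IHt _ yt; rewrite andbT.
by apply: contraNN (acyc Axy) => /(path_connect yt).
Qed.

Lemma path_size x t : path A x t -> size t < #|V|.
Proof. by move/path_uniq/card_uniqP => /= <-; apply: max_card. Qed.

Lemma npaths_len_eq0 k u v : #|V| <= k -> npaths_len k u v = 0.
Proof.
move=> Vk; apply/eqP; rewrite sum_nat_eq0; apply/forallP => t.
apply/implyP=> _; case ut: (path A u t) => //=.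
by move: (path_size ut); rewrite size_tuple ltnNge Vk.
Qed.

Lemma npaths_bound N u v : #|V| <= N -> m u v = \sum_(k < N) npaths_len k u v.
Proof.
move=> VN; rewrite npathsE -!(big_mkord xpredT (fun k => npaths_len k u v)).
rewrite (@big_cat_nat _ _ _ #|V| 0 N _ _ (leq0n _) VN) /= [X in _ + X]big_nat_cond.
by rewrite [X in _ + X]big1 ?addn0 // => k /andP[/andP[Vk _] _]; apply: npaths_len_eq0.
Qed.

Lemma npaths_recl u v : m u v = (u == v) + \sum_(w in children u) m w v.
Proof.
rewrite (npaths_bound u v (leqnSn _)) -(big_mkord xpredT (fun k => npaths_len k u v)).
rewrite big_nat_recl // npaths_len0; congr addn.
under eq_bigr do rewrite npaths_lenSl.
by rewrite exchange_big; apply: eq_bigr => w _; rewrite npathsE big_mkord.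
Qed.

Lemma npaths_recr u v : m u v = (u == v) + \sum_(w in parents v) m u w.
Proof.
rewrite (npaths_bound u v (leqnSn _)) -(big_mkord xpredT (fun k => npaths_len k u v)).
rewrite big_nat_recl // npaths_len0; congr addn.
under eq_bigr do rewrite npaths_lenSr.
by rewrite exchange_big; apply: eq_bigr => w _; rewrite npathsE big_mkord.
Qed.

Lemma npaths_child v c w : children v = [set c] -> m v w = (v == w) + m c w.
Proof. by move=> Cv; rewrite npaths_recl Cv big_set1. Qed.

Lemma npaths_children2 v c1 c2 w : c1 != c2 -> children v = [set c1; c2] ->
  m v w = (v == w) + m c1 w + m c2 w.
Proof. by move=> c12 Cv; rewrite npaths_recl Cv sum_set2 ?addnA. Qed.

Lemma npaths_parent u w p : parents w = [set p] -> m u w = (u == w) + m u p.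
Proof. by move=> Pw; rewrite npaths_recr Pw big_set1. Qed.

Lemma npaths_parents2 u w p1 p2 : p1 != p2 -> parents w = [set p1; p2] ->
  m u w = (u == w) + m u p1 + m u p2.
Proof. by move=> p12 Pw; rewrite npaths_recr Pw sum_set2 ?addnA. Qed.

Lemma npaths_gt0 u v : (0 < m u v) = connect A u v.
Proof.
apply/idP/connectP => [|[p up ->]].
  rewrite /npaths lt0n sum_nat_eq0 => /forallPn[k /=]; rewrite -lt0n => /card_gt0P[t].
  by rewrite inE => /andP[ut /eqP <-]; exists t.
rewrite /npaths (bigD1 (Ordinal (path_size up))) //= ltn_addr //.
by apply/card_gt0P; exists (in_tuple p); rewrite inE up eqxx.
Qed.

Lemma acyclic_ind (P : V -> Prop) :
  (forall x, (forall y, A x y -> P y) -> P x) -> forall x, P x.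
Proof.
move=> IH; suff Pk k x : (forall t, path A x t -> size t < k) -> P x.
  by move=> x; apply: (Pk #|V|) => t; apply: path_size.
elim: k x => [|k IHk] x xk; first by have := xk [::] isT.
apply: IH => y Axy; apply: IHk => t yt.
by have := xk (y :: t); rewrite /= Axy yt; apply.
Qed.

Lemma acyclic_rev : acyclic [rel x y | A y x].
Proof. by move=> u v /= Avu; rewrite connect_rev; apply: acyc. Qed.

End PathCount.

Section Network.
Variables (V : finType) (A : rel V) (lab : V -> nat) (n : nat).
Hypothesis HN : is_network A lab n.
Local Notation m := (npaths A).
Local Notation parents := (parents A).
Local Notation children := (children A).

Lemma network_acyclic : acyclic A. Proof. by case: HN. Qed.

Variant kind_spec (v : V) : bool -> bool -> bool -> bool -> Prop :=
  | KindRoot c of parents v = set0 & children v = [set c] :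
      kind_spec v true false false false
  | KindLeaf p of parents v = [set p] & children v = set0 :
      kind_spec v false true false false
  | KindTree p c1 c2 of c1 != c2 & parents v = [set p] & children v = [set c1; c2] :
      kind_spec v false false true false
  | KindRet p1 p2 c of p1 != p2 & parents v = [set p1; p2] & children v = [set c] :
      kind_spec v false false false true.

Lemma kindP v : kind_spec v (is_root A v) (is_leaf A v) (is_tree A v) (is_ret A v).
Proof.
have [_ /(_ v) + _ _ _] := HN.
rewrite /is_root /is_leaf /is_tree /is_ret /indeg /outdeg -/(parents v) -/(children v).
case/or4P => /andP[Pv Cv]; rewrite (eqP Pv) (eqP Cv) /=.
- have /cards1P[c Cc] := Cv; exact: KindRoot (cards0_eq (eqP Pv)) Cc.
- have /cards1P[p Pp] := Pv; exact: KindLeaf Pp (cards0_eq (eqP Cv)).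
- have /cards1P[p Pp] := Pv; have /cards2P[c1 [c2 [c12 Cc]]] := Cv.
  exact: KindTree c12 Pp Cc.
- have /cards2P[p1 [p2 [p12 Pp]]] := Pv; have /cards1P[c Cc] := Cv.
  exact: KindRet p12 Pp Cc.
Qed.

Local Notation acyc := network_acyclic.

Lemma npaths_leaf v w : is_leaf A v -> m v w = (v == w).
Proof.
by case: (kindP v) => // p _ Cv _; rewrite (npaths_recl acyc) Cv big_set0 addn0.
Qed.

Lemma connect_leaf v w : is_leaf A v -> connect A v w -> w = v.
Proof. by move=> Lv; rewrite -(npaths_gt0 acyc) npaths_leaf // lt0b => /eqP. Qed.

Lemma reach_leaf x : exists2 w, is_leaf A w & connect A x w.
Proof.
elim/(acyclic_ind acyc): x => x IH.
case Lx: (is_leaf A x); first by exists x.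
have [c Axc] : exists c, A x c.
  move: Lx; case: (kindP x) => // [c _ Cx | p c c' _ _ Cx | p p' c _ _ Cx] _;
  by exists c; rewrite -in_children Cx !inE eqxx.
have [w Lw cw] := IH c Axc.
by exists w => //; apply: connect_trans (connect1 Axc) cw.
Qed.

Lemma root_unique r y : is_root A r -> is_root A y -> y = r.
Proof.
have [_ _ /eqP/cards1P[r0 R0] _ _] := HN.
by rewrite -!(in_set (is_root A)) R0 => /set1P -> /set1P ->.
Qed.

Lemma root_connect r y : is_root A r -> connect A r y.
Proof.
move=> Rr; elim/(acyclic_ind (acyclic_rev acyc)): y => y IH.
case Ry: (is_root A y); first by rewrite (root_unique Rr Ry) connect0.
have [p Apy] : exists p, A p y.
  move: Ry; case: (kindP y) => // [p | p c c' _ | p p' c _] Py _;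
  by exists p; rewrite -in_parents Py !inE eqxx.
exact: connect_trans (IH p Apy) (connect1 Apy).
Qed.

Lemma leaf_neq x v : ~~ is_leaf A x -> is_leaf A v -> x != v.
Proof. by move=> Lx Lv; apply: contraNneq Lx => ->. Qed.

Lemma tree_not_leaf x : is_tree A x -> ~~ is_leaf A x.
Proof. by case: (kindP x). Qed.

Lemma ret_not_leaf x : is_ret A x -> ~~ is_leaf A x.
Proof. by case: (kindP x). Qed.

Lemma VT_not_ret x : is_VT A x -> ~~ is_ret A x.
Proof. by rewrite /is_VT; case: (kindP x). Qed.

Definition npaths_ret (u : V) : nat := \sum_(h | is_ret A h) m u h.

Lemma npaths_ret_rec v :
  npaths_ret v = is_ret A v + \sum_(c in children v) npaths_ret c.
Proof.
rewrite /npaths_ret; under eq_bigr do rewrite (npaths_recl acyc) eq_sym.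
by rewrite big_split /= sum_pred_eq exchange_big.
Qed.

Lemma npaths_le_ret u h : is_ret A h -> m u h <= npaths_ret u.
Proof. by move=> Rh; rewrite /npaths_ret (bigD1 h) //= leq_addr. Qed.

Lemma npaths_ret_gt0 h : is_ret A h -> 0 < npaths_ret h.
Proof.
move=> Rh; apply: leq_trans (npaths_le_ret h Rh).
by rewrite (npaths_gt0 acyc) connect0.
Qed.

Lemma npaths_ret_leaf v : is_leaf A v -> npaths_ret v = 0.
Proof.
move=> Lv; rewrite /npaths_ret big1 // => h Rh; rewrite npaths_leaf //.
by case: eqP => // vh; move: Rh Lv; rewrite -vh; case: (kindP v).
Qed.

Lemma leaf_parents v p : is_leaf A v -> A p v -> parents v = [set p].
Proof.
by case: (kindP v) => // q Pv _ _; rewrite -in_parents Pv => /set1P ->.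
Qed.

Lemma leaf_parent_uniq v p q : is_leaf A v -> A p v -> A q v -> q = p.
Proof. by move=> Lv pv; rewrite -in_parents (leaf_parents Lv pv) => /set1P. Qed.

Lemma ret_child v c : is_ret A v -> A v c -> children v = [set c].
Proof.
by case: (kindP v) => // _ _ d _ _ Cv _; rewrite -in_children Cv => /set1P ->.
Qed.

Lemma ret_parents v p : is_ret A v -> A p v ->
  exists2 q, p != q & parents v = [set p; q].
Proof.
case: (kindP v) => // p1 p2 c p12 Pv _ _; rewrite -in_parents Pv => /set2P[]->.
  by exists p2.
by exists p1; rewrite 1?eq_sym // setUC.
Qed.

Lemma root_child_spec : exists r, [/\ is_VT A r,
  forall x, is_root A x -> children x = [set r] &
  forall y, ~~ is_root A y -> connect A r y].
Proof.
have [_ _ /eqP/cards1P[rt R1] _ _] := HN.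
have Rrt : is_root A rt by rewrite -(in_set (is_root A)) R1 set11.
case: (kindP rt) (Rrt) => // r Prt Crt _; exists r.
have rt_r : A rt r by rewrite -in_children Crt set11.
have top y : ~~ is_root A y -> connect A r y.
  move=> Ry; move: (root_connect y Rrt) Ry => /connectP[[|c p] /= rtp ->].
    by rewrite Rrt.
  case/andP: rtp; rewrite -in_children Crt => /set1P -> rp _.
  by apply/connectP; exists p.
have Rr : ~~ is_root A r.
  by apply/negP => /(root_unique Rrt) er; move: rt_r; rewrite er -in_parents Prt inE.
have NRr : ~~ is_ret A r.
  apply/negP => Rr'; have [q rt_q Pr] := ret_parents Rr' rt_r.
  have qr : A q r by rewrite -in_parents Pr set22.
  have Rq : ~~ is_root A q by apply: contraNN rt_q => /(root_unique Rrt) ->.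
  by move/negP: (acyc qr); apply; apply: top.
split=> //; first by move: Rr NRr; rewrite /is_VT; case: (kindP r).
by move=> x Rx; rewrite (root_unique Rrt Rx).
Qed.

Local Notation mu := (mu_vec A lab n).

Lemma label_bounds v : is_leaf A v -> 1 <= lab v <= n.
Proof. by case: HN => _ _ _ + _; apply. Qed.

Lemma label_inj : {in is_leaf A &, injective lab}.
Proof. by case: HN. Qed.

Lemma mu_vec0 u : mu u ord0 = npaths_ret u.
Proof. by rewrite ffunE. Qed.

Lemma mu_vec_leaf u v : is_leaf A v -> mu u (inord (lab v)) = m u v.
Proof.
move=> Lv; have /andP[lv_gt0 lv_le] := label_bounds Lv.
rewrite ffunE inordK ?ltnS // eqn0Ngt lv_gt0 /= (big_pred1 v) // => w.
by apply/andP/eqP => [[Lw /eqP /(label_inj Lw Lv)] | ->] //; rewrite eqxx.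
Qed.

Lemma mu_vec_count u s : (forall w, m u w = count_mem w s) ->
  mu u = [ffun k : 'I_n.+1 => if (k : nat) == 0 then count (is_ret A) s
                              else count (fun y => is_leaf A y && (lab y == k)) s].
Proof.
move=> us; apply/ffunP => k; rewrite !ffunE.
by case: ifP => _; under eq_bigr do rewrite us; rewrite sum_count_mem.
Qed.

Lemma leaf_of_mu_vec u k : 0 < k <= n -> 0 < mu u (inord k) ->
  exists2 v, is_leaf A v & lab v = k.
Proof.
case/andP=> k_gt0 kn; rewrite ffunE inordK ?ltnS // eqn0Ngt k_gt0 /=.
case: (pickP (fun w => is_leaf A w && (lab w == k))) => [w /andP[Lw /eqP lw] | none].
  by exists w.
by rewrite big_pred0.
Qed.

Lemma mu_vec_leaf_delta v : is_leaf A v -> mu v = delta n [:: lab v].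
Proof.
move=> Lv; have /andP[lv_gt0 _] := label_bounds Lv.
rewrite (@mu_vec_count _ [:: v]) => [|w]; last by rewrite npaths_leaf //= addn0.
apply/ffunP => k; rewrite !ffunE /= inE addn0 Lv eq_sym.
case: (kindP v) Lv => // p _ _ _ /=.
by case: eqP => [<- | _]; [rewrite eq_sym eqn0Ngt lv_gt0 | rewrite addn0 eq_sym].
Qed.

Lemma children2_tree p a b : A p a -> A p b -> a != b ->
  is_tree A p /\ children p = [set a; b].
Proof.
move=> + + ab; rewrite -!in_children.
case: (kindP p) => [c _ -> | _ _ -> | _ c1 c2 _ _ -> | _ _ c _ _ ->].
- by move=> /set1P ea /set1P eb; rewrite ea eb eqxx in ab.
- by rewrite inE.
- case/set2P=> ea; case/set2P=> eb; subst a b; rewrite ?eqxx // in ab.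
  by split=> //; apply/setP => x; rewrite !inE orbC.
- by move=> /set1P ea /set1P eb; rewrite ea eb eqxx in ab.
Qed.

Lemma npaths_delta_leaf u v S :
  mu u = delta n S -> is_leaf A v -> m u v = (lab v \in S).
Proof.
move=> uS Lv; have /andP[_ lv_le] := label_bounds Lv.
by rewrite -mu_vec_leaf // uS delta_inord.
Qed.

Lemma mu_vec_cherry p vi vj : is_tree A p -> children p = [set vi; vj] ->
  is_leaf A vi -> is_leaf A vj -> lab vi != lab vj ->
  mu p = delta n [:: lab vi; lab vj].
Proof.
move=> Tp Cp Li Lj lij; have vij : vi != vj by apply: contraNneq lij => ->.
rewrite (@mu_vec_count _ [:: p; vi; vj]) => [|w]; last first.
  by rewrite (npaths_children2 acyc _ vij Cp) !npaths_leaf //= addn0 addnA.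
apply/ffunP => k; rewrite !ffunE /= -eqn_add_mem2 // Li Lj.
case: (kindP p) Tp => // _ _ _ _ _ _ _; case: (kindP vi) (Li) => // _ _ _ _.
case: (kindP vj) (Lj) => // _ _ _ _; case: eqP => [k0 | _] /=; last by rewrite addn0.
have /andP[+ _] := label_bounds Li; have /andP[+ _] := label_bounds Lj.
by rewrite k0 !eqn0Ngt => -> ->.
Qed.

Lemma mu_vec_ret_cherry pj pi vi vj : is_tree A pj -> children pj = [set pi; vj] ->
  is_ret A pi -> children pi = [set vi] ->
  is_leaf A vi -> is_leaf A vj -> lab vi != lab vj ->
  mu pj = delta n [:: 0; lab vi; lab vj].
Proof.
move=> Tj Cj Ri Ci Li Lj lij.
have ij : pi != vj by apply: leaf_neq Lj; apply: ret_not_leaf.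
rewrite (@mu_vec_count _ [:: pj; pi; vi; vj]) => [|w]; last first.
  rewrite (npaths_children2 acyc _ ij Cj) (npaths_child acyc _ Ci) !npaths_leaf //=.
  by rewrite addn0 !addnA.
apply/ffunP => k; rewrite !ffunE /= in_cons.
case: (kindP pj) Tj => // _ _ _ _ _ _ _; case: (kindP pi) Ri => // _ _ _ _ _ _ _.
case: (kindP vi) Li => // _ _ _ _; case: (kindP vj) Lj => // _ _ _ _.
by case: eqP => [-> | _] //=; rewrite addn0 -eqn_add_mem2.
Qed.

Lemma mu_netP x :
  reflect (exists2 u, is_VT A u & x = mu u) (x \in mu_net A lab n).
Proof.
apply: (iffP mapP) => [[u] | [u Tu ->]]; last by exists u; rewrite ?mem_enum.
by rewrite mem_enum => Tu ->; exists u; first exact: Tu.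
Qed.

Lemma count_mu_net_eq1 x p : is_VT A p -> mu p = x ->
  (forall u, is_VT A u -> mu u = x -> u = p) -> count_mem x (mu_net A lab n) = 1.
Proof.
move=> Tp px uniq_p; rewrite count_map.
rewrite (eq_in_count (a2 := pred1 p)) => [|u]; last first.
  by rewrite mem_enum => Tu /=; apply/eqP/eqP => [/(uniq_p _ Tu) | ->].
by rewrite count_uniq_mem ?enum_uniq // mem_enum -topredE /= Tp.
Qed.

End Network.

Section PairBelow.
Variables (V : finType) (A : rel V) (lab : V -> nat) (n : nat).
Hypothesis HN : is_network A lab n.
Variables (vi vj u : V).
Hypotheses (Li : is_leaf A vi) (Lj : is_leaf A vj) (vij : vi != vj).
Local Notation m := (npaths A).
Local Notation acyc := (network_acyclic HN).
Local Notation hits x := (m x vi + m x vj).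
Hypotheses (u_vi : m u vi = 1) (u_vj : m u vj = 1)
  (below_u : forall w, is_leaf A w -> connect A u w -> (w == vi) || (w == vj)).

Lemma hits_gt0 x : connect A u x -> 0 < hits x.
Proof.
move=> ux; have [w Lw xw] := reach_leaf HN x.
have /orP[/eqP wi | /eqP wj] := below_u Lw (connect_trans ux xw); move: xw.
  by rewrite -(npaths_gt0 acyc) wi => /ltn_addr.
by rewrite -(npaths_gt0 acyc) wj => /ltn_addl.
Qed.

Lemma hits_tree x : connect A u x -> is_tree A x -> 1 < hits x.
Proof.
move=> ux Tx; have Lx := tree_not_leaf HN Tx.
case: (kindP HN x) Tx => // _ c1 c2 c12 _ Cx _.
have hc (c : V) : c \in [set c1; c2] -> 0 < hits c.
  by rewrite -Cx in_children => xc; apply: hits_gt0 (connect_trans ux (connect1 xc)).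
rewrite !(npaths_children2 acyc _ c12 Cx).
rewrite (negbTE (leaf_neq Lx Li)) (negbTE (leaf_neq Lx Lj)).
by have := hc _ (set21 c1 c2); have := hc _ (set22 c1 c2); lia.
Qed.

Lemma VT_top_tree : is_VT A u -> is_tree A u.
Proof.
case/orP => // Lu; move: u_vi u_vj vij; rewrite !(npaths_leaf HN _ Lu).
by case: (u =P vi) => // <-; case: (u =P vj) => // <-; rewrite eqxx.
Qed.

Lemma children_hits1 c : is_VT A u -> A u c -> hits c = 1.
Proof.
move/VT_top_tree => Tu; have Lu := tree_not_leaf HN Tu.
case: (kindP HN u) Tu => // _ c1 c2 c12 _ Cu _.
have A1 : A u c1 by rewrite -in_children Cu set21.
have A2 : A u c2 by rewrite -in_children Cu set22.
have h1 := hits_gt0 (connect1 A1); have h2 := hits_gt0 (connect1 A2).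
have := u_vi; have := u_vj; rewrite !(npaths_children2 acyc _ c12 Cu).
rewrite (negbTE (leaf_neq Lu Li)) (negbTE (leaf_neq Lu Lj)) /= => hj hi.
by rewrite -in_children Cu => /set2P[->|->]; lia.
Qed.

Lemma hits1_kind y x : connect A u y -> A y x -> hits x = 1 ->
  [|| x == vi, x == vj | is_ret A x].
Proof.
move=> uy yx hx; have ux := connect_trans uy (connect1 yx).
case Lx: (is_leaf A x); first by rewrite orbA below_u.
case Tx: (is_tree A x); first by have := hits_tree ux Tx; rewrite hx.
case: (kindP HN x) Lx Tx => [c Px _ _ _ | | | *]; rewrite ?orbT //.
by move: yx; rewrite -in_parents Px inE.
Qed.

Local Notation npaths_ret := (npaths_ret A).

Lemma cherry_shape : is_VT A u -> npaths_ret u = 0 -> A u vi && A u vj.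
Proof.
move=> Tu ret0; have Tt := VT_top_tree Tu.
have leaf_child c : A u c -> (c == vi) || (c == vj).
  move=> uc; have := hits1_kind (connect0 A u) uc (children_hits1 Tu uc).
  rewrite orbA; case/orP=> // Rc; have := npaths_le_ret u Rc.
  by rewrite ret0 leqn0 eqn0Ngt (npaths_gt0 acyc) (connect1 uc).
case: (kindP HN u) Tt => // _ c1 c2 + _ Cu _.
have /leaf_child/orP h1 : A u c1 by rewrite -in_children Cu set21.
have /leaf_child/orP h2 : A u c2 by rewrite -in_children Cu set22.
rewrite -!in_children Cu !inE.
by case: h1 => /eqP ->; case: h2 => /eqP ->; rewrite !eqxx ?orbT.
Qed.

Lemma ret_cherry_shape : is_VT A u -> npaths_ret u = 1 ->
  exists2 b, is_ret A b & A u b /\ (A u vj && A b vi || A u vi && A b vj).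
Proof.
move=> Tu ret1; have Tt := VT_top_tree Tu.
have kind_child c : A u c -> [|| c == vi, c == vj | is_ret A c].
  by move=> uc; apply: hits1_kind (connect0 A u) uc (children_hits1 Tu uc).
have ret_ij a : (a == vi) || (a == vj) -> npaths_ret a = 0.
  by case/orP=> /eqP ->; rewrite (npaths_ret_leaf HN).
suff shape a b : A u a -> A u b -> a != b -> (a == vi) || (a == vj) ->
    is_ret A b -> npaths_ret b = 1 ->
    exists2 b, is_ret A b & A u b /\ (A u vj && A b vi || A u vi && A b vj).
  case: (kindP HN u) Tt => // _ c1 c2 c12 _ Cu _.
  have u1 : A u c1 by rewrite -in_children Cu set21.
  have u2 : A u c2 by rewrite -in_children Cu set22.
  move: ret1; rewrite (npaths_ret_rec HN) (negbTE (VT_not_ret HN Tu)) add0n.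
  rewrite Cu sum_set2 // => ret12.
  have := kind_child _ u1; have := kind_child _ u2; rewrite !orbA.
  case/orP=> [ij2 | R2]; case/orP=> [ij1 | R1].
  - by move: ret12; rewrite !ret_ij.
  - have r1 : npaths_ret c1 = 1 by rewrite -ret12 (ret_ij _ ij2) addn0.
    by apply: shape u2 u1 _ ij2 R1 r1; rewrite eq_sym.
  - have r2 : npaths_ret c2 = 1 by rewrite -ret12 (ret_ij _ ij1).
    exact: shape u1 u2 c12 ij1 R2 r2.
  - by move: ret12 (npaths_ret_gt0 HN R1) (npaths_ret_gt0 HN R2); lia.
move=> ua ub ab aij Rb retb1.
case: (kindP HN b) (Rb) => // _ _ e _ _ Cb _.
have be : A b e by rewrite -in_children Cb set11.
have Lb := ret_not_leaf HN Rb.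
have rete0 : npaths_ret e = 0.
  by move: retb1; rewrite (npaths_ret_rec HN) Cb big_set1 Rb => -[].
have hits_e : hits e = 1.
  rewrite -(children_hits1 Tu ub) !(npaths_child acyc _ Cb).
  by rewrite (negbTE (leaf_neq Lb Li)) (negbTE (leaf_neq Lb Lj)).
have eij : (e == vi) || (e == vj).
  move: (hits1_kind (connect1 ub) be hits_e); rewrite orbA; case/orP=> // Re.
  by move: (npaths_ret_gt0 HN Re); rewrite rete0.
have ae : a != e.
  apply: contraNneq (VT_not_ret HN Tu) => ae; rewrite -ae in be.
  have La : is_leaf A a by case/orP: aij => /eqP ->.
  case: (kindP HN a) La => // p Pa _ _.
  by move: ua be; rewrite -!in_parents Pa => /set1P -> /set1P <-.
exists b => //; split => //; move: ae ua be.
by case/orP: aij => /eqP ->; case/orP: eij => /eqP ->;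
  rewrite ?eqxx // => _ -> ->; rewrite ?orbT.
Qed.

End PairBelow.

Section Reducibility.
Variables (V : finType) (A : rel V) (lab : V -> nat) (n : nat).
Hypothesis HN : is_network A lab n.
Variables i j : nat.
Hypotheses (Hi : 1 <= i <= n) (Hj : 1 <= j <= n) (Hij : i != j).
Local Notation m := (npaths A).
Local Notation mu := (mu_vec A lab n).
Local Notation acyc := (network_acyclic HN).

Lemma mu_delta_leaf u S k : mu u = delta n S -> k \in S -> 0 < k <= n ->
  exists2 v, is_leaf A v & lab v = k.
Proof.
move=> uS kS kn; apply: (leaf_of_mu_vec (u := u)) (kn) _.
by rewrite uS delta_inord ?kS //; case/andP: kn.
Qed.

Lemma mu_delta_below u S vi vj : is_leaf A vi -> lab vi = i ->
  is_leaf A vj -> lab vj = j -> mu u = delta n S -> {subset S <= [:: 0; i; j]} ->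
  forall w, is_leaf A w -> connect A u w -> (w == vi) || (w == vj).
Proof.
move=> Li li Lj lj uS Sij w Lw; rewrite -(npaths_gt0 acyc) (npaths_delta_leaf HN uS Lw).
rewrite lt0b => /Sij; have /andP[lw_gt0 _] := label_bounds HN Lw.
rewrite !inE eqn0Ngt lw_gt0 -li -lj /= => /orP[] /eqP lw.
  by rewrite (label_inj HN Lw Li lw) eqxx.
by rewrite (label_inj HN Lw Lj lw) eqxx orbT.
Qed.

Lemma zero_notin_ij : 0 \notin [:: i; j].
Proof.
by rewrite !inE ![0 == _]eq_sym !eqn0Ngt; case/andP: Hi => ->; case/andP: Hj => ->.
Qed.

Lemma ij_sub_0ij : {subset [:: i; j] <= [:: 0; i; j]}.
Proof. by move=> k; apply: (@mem_behead _ [:: 0; i; j]). Qed.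

Section Top.
Variables (vi vj u : V) (S : seq nat).
Hypotheses (Li : is_leaf A vi) (li : lab vi = i) (Lj : is_leaf A vj) (lj : lab vj = j).
Hypotheses (Tu : is_VT A u) (uS : mu u = delta n S).
Hypotheses (ijS : {subset [:: i; j] <= S}) (Sij : {subset S <= [:: 0; i; j]}).

Lemma leaves_neq : vi != vj.
Proof. by apply: contraNneq Hij => e; rewrite -li -lj e. Qed.

Lemma top_npaths_vi : m u vi = 1.
Proof. by rewrite (npaths_delta_leaf HN uS Li) li ijS ?mem_head. Qed.

Lemma top_npaths_vj : m u vj = 1.
Proof. by rewrite (npaths_delta_leaf HN uS Lj) lj ijS // !inE eqxx orbT. Qed.

Lemma top_npaths_ret : npaths_ret A u = (0 \in S).
Proof. by rewrite -(@mu_vec0 _ _ lab n) uS delta_ord0. Qed.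

Local Notation below := (mu_delta_below Li li Lj lj uS Sij).

Lemma cherry_top : 0 \notin S -> A u vi && A u vj.
Proof.
move=> S0.
apply: (cherry_shape HN Li Lj leaves_neq top_npaths_vi top_npaths_vj below Tu).
by rewrite top_npaths_ret (negbTE S0).
Qed.

Lemma ret_cherry_top : 0 \in S ->
  exists2 b, is_ret A b & A u b /\ (A u vj && A b vi || A u vi && A b vj).
Proof.
move=> S0.
apply: (ret_cherry_shape HN Li Lj leaves_neq top_npaths_vi top_npaths_vj below Tu).
by rewrite top_npaths_ret S0.
Qed.

End Top.

Local Notation muN := (mu_net A lab n).

Lemma leaf_mu_neq u v : is_leaf A v -> mu u != delta n [:: lab v] -> u != v.
Proof. by move=> Lv; apply: contraNneq => ->; rewrite mu_vec_leaf_delta. Qed.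

Lemma net_cherry_ms : net_cherry A lab i j -> ms_cherry muN i j.
Proof.
case=> vi [vj [p [[Li li Lj lj] [pvi pvj]]]].
have vij := leaves_neq li lj.
have [Tp Cp] := children2_tree HN pvi pvj vij.
have mu_p : mu p = delta n [:: i; j].
  by rewrite -li -lj; apply: mu_vec_cherry; rewrite ?li ?lj.
split.
  apply: count_mu_net_eq1 mu_p _ => [|u Tu uij]; first by rewrite /is_VT Tp orbT.
  have /andP[uvi _] :=
    cherry_top Li li Lj lj Tu uij (fun _ => id) ij_sub_0ij zero_notin_ij.
  exact: (leaf_parent_uniq HN Li pvi uvi).
move=> _ /mu_netP[u Tu ->]; rewrite -{1}li -{1}lj.
move=> /(leaf_mu_neq Li) uvi /(leaf_mu_neq Lj) uvj.
rewrite -li -lj !mu_vec_leaf // (npaths_parent acyc _ (leaf_parents HN Li pvi)).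
by rewrite (npaths_parent acyc _ (leaf_parents HN Lj pvj)) (negbTE uvi) (negbTE uvj).
Qed.

Lemma net_ret_cherry_ms : net_ret_cherry A lab i j -> ms_ret_cherry muN i j.
Proof.
case=> vi [vj [pi [pj [[Li li Lj lj] [pi_vi pj_vj Ri Tj pj_pi]]]]].
have pi_vj : pi != vj by exact: (leaf_neq (ret_not_leaf HN Ri) Lj).
have [_ Cj] := children2_tree HN pj_pi pj_vj pi_vj.
have [q pj_q Pi] := ret_parents HN Ri pj_pi.
have mu_pj : mu pj = delta n [:: 0; i; j].
  rewrite -li -lj; apply: (mu_vec_ret_cherry HN Tj Cj Ri (ret_child HN Ri pi_vi) Li Lj).
  by rewrite li lj.
have VT_neq_pi u : is_VT A u -> u != pi.
  by move=> Tu; apply: contraNneq (VT_not_ret HN Tu) => ->.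
split.
  apply: count_mu_net_eq1 mu_pj _ => [|u Tu uij]; first by rewrite /is_VT Tj orbT.
  have [b _ [_ /orP[/andP[u_vj _] | /andP[u_vi _]]]] :=
    ret_cherry_top Li li Lj lj Tu uij ij_sub_0ij (fun _ => id) (mem_head _ _).
    exact: (leaf_parent_uniq HN Lj pj_vj u_vj).
  by have := VT_neq_pi u Tu; rewrite (leaf_parent_uniq HN Li pi_vi u_vi) eqxx.
move=> _ /mu_netP[u Tu ->]; rewrite -{1}li -{1}lj.
move=> /(leaf_mu_neq Li) uvi /(leaf_mu_neq Lj) uvj.
rewrite -li -lj !mu_vec_leaf // mu_vec0.
rewrite (npaths_parent acyc _ (leaf_parents HN Li pi_vi)) (negbTE uvi) add0n.
rewrite (npaths_parent acyc _ (leaf_parents HN Lj pj_vj)) (negbTE uvj) add0n.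
rewrite (npaths_le_ret u Ri); split=> //.
by rewrite (npaths_parents2 acyc _ pj_q Pi) (negbTE (VT_neq_pi u Tu)) add0n leq_addr.
Qed.

Lemma mu_net_of_count1 x : count_mem x muN = 1 -> exists2 u, is_VT A u & mu u = x.
Proof.
move=> x1; have /mu_netP[u Tu xu] : x \in muN by rewrite -has_pred1 has_count x1.
by exists u.
Qed.

Lemma ms_cherry_net : ms_cherry muN i j -> net_cherry A lab i j.
Proof.
case=> /mu_net_of_count1[u Tu uij] _.
have [vi Li li] := mu_delta_leaf uij (mem_head _ _) Hi.
have [vj Lj lj] := mu_delta_leaf uij (mem_last i [:: j]) Hj.
have /andP[u_vi u_vj] :=
  cherry_top Li li Lj lj Tu uij (fun _ => id) ij_sub_0ij zero_notin_ij.
by exists vi, vj, u.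
Qed.

Lemma ret_cherry_swapped u b vi vj : is_leaf A vi -> lab vi = i ->
  is_leaf A vj -> lab vj = j -> is_ret A b -> A u b -> A u vi -> A b vj ->
  exists2 x, x \in muN &
    [/\ x != delta n [:: i], x != delta n [:: j] & x (inord i) < x (inord j)].
Proof.
(* The witness is the child r of the root, which reaches both parents u and q of b. *)
move=> Li li Lj lj Rb ub uvi bvj.
have [r [Tr Croot top]] := root_child_spec HN.
have [q uq Pb] := ret_parents HN Rb ub.
have qb : A q b by rewrite -in_parents Pb set22.
have Rq : ~~ is_root A q.
  apply/negP => /Croot Cq; move: qb; rewrite -in_children Cq => /set1P br.
  by move: (VT_not_ret HN Tr); rewrite -br Rb.
have rb : connect A r b := connect_trans (top q Rq) (connect1 qb).
have rq : 0 < m r q by rewrite (npaths_gt0 acyc) top.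
have r_neq_leaf v : is_leaf A v -> r != v.
  move=> Lv; apply: contraTneq rb => ->; apply/negP => /(connect_leaf HN Lv) bv.
  by move: (ret_not_leaf HN Rb); rewrite bv Lv.
have r_neq_b : r != b by apply: contraNneq (VT_not_ret HN Tr) => ->.
have r_vi : m r vi = m r u.
  by rewrite (npaths_parent acyc _ (leaf_parents HN Li uvi)) (negbTE (r_neq_leaf _ Li)).
have r_vj : m r vj = m r u + m r q.
  rewrite (npaths_parent acyc _ (leaf_parents HN Lj bvj)) (negbTE (r_neq_leaf _ Lj)).
  by rewrite (npaths_parents2 acyc _ uq Pb) (negbTE r_neq_b) add0n.
have lvj_n : lab vj <= n by case/andP: (label_bounds HN Lj).
have lij : lab vj != lab vi by rewrite li lj eq_sym.
exists (mu r); first by apply/mu_netP; exists r.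
rewrite -li -lj !mu_vec_leaf // r_vi r_vj; split; last by rewrite -addn1 leq_add2l.
- apply/eqP => /(congr1 (fun x : {ffun 'I_n.+1 -> nat} => x (inord (lab vj)))).
  by rewrite /= mu_vec_leaf // delta_inord // inE (negbTE lij) r_vj; lia.
- apply/eqP => /(congr1 (fun x : {ffun 'I_n.+1 -> nat} => x ord0)).
  rewrite /= mu_vec0 delta_ord0 inE eq_sym eqn0Ngt.
  have /andP[-> _] := label_bounds HN Lj.
  have := npaths_le_ret r Rb; rewrite -(npaths_gt0 acyc) in rb; lia.
Qed.

Lemma ms_ret_cherry_net : ms_ret_cherry muN i j -> net_reducible A lab i j.
Proof.
case=> /mu_net_of_count1[u Tu uij] ms_le.
have [vi Li li] := mu_delta_leaf uij (ij_sub_0ij (mem_head i [:: j])) Hi.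
have [vj Lj lj] := mu_delta_leaf uij (ij_sub_0ij (mem_last i [:: j])) Hj.
have [b Rb [ub /orP[/andP[u_vj b_vi] | /andP[u_vi b_vj]]]] :=
  ret_cherry_top Li li Lj lj Tu uij ij_sub_0ij (fun _ => id) (mem_head _ _).
  have [Tt _] := children2_tree HN ub u_vj (leaf_neq (ret_not_leaf HN Rb) Lj).
  by right; exists vi, vj, b, u.
have [x xs [xi xj]] := ret_cherry_swapped Li li Lj lj Rb ub u_vi b_vj.
by have [_] := ms_le x xs xi xj; rewrite leqNgt => /negP.
Qed.

End Reducibility.

Theorem mainTheorem6 (n : nat) (V : finType) (A : rel V) (lab : V -> nat)
  (HN : is_network A lab n) (i j : nat)
  (Hi : 1 <= i <= n) (Hj : 1 <= j <= n) (Hij : i != j) :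
  net_reducible A lab i j <-> ms_reducible (mu_net A lab n) i j.
Proof.
split=> [[] red | [] red].
- by left; apply: (net_cherry_ms HN Hi Hj Hij).
- by right; apply: (net_ret_cherry_ms HN Hij).
- by left; apply: (ms_cherry_net HN Hi Hj Hij).
- exact: (ms_ret_cherry_net HN Hi Hj Hij).
Qed.
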